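(* Let $U=[n,u,E,B]$ satisfy for all $t>0$, $x\in\mathbb{R}^3$ the linear system \begin{equation*} \partial_t n +\gamma \nabla\cdot u =0,\quad \partial_t u+\gamma \nabla n +\beta {E}-\mu\Delta u=0,\quad \partial_t {E} - \nabla \times {B} -\beta u = 0,\quad \partial_t {B} + \nabla \times {E} = 0,\quad \nabla \cdot{E} = -\frac{\beta}{\gamma}n, \ \ \nabla\cdot {B} =0, \end{equation*} with initial data $U|_{t=0}=U_0=[n_0,u_0,E_0,B_0]$. For $k\ne0$ let $\tilde k=k/|k|$ and $\hat u_\perp=-\tilde k\times(\tilde k\times\hat u)=(\mathbf I_3-\tilde k\otimes\tilde k)\hat u$, and likewise $\hat E_\perp,\hat B_\perp$ and their initial values. Then, except for a finite number of values of $|k|$, \begin{equation*} \begin{pmatrix}\hat u_\perp\\ \hat E_\perp\\ \hat B_\perp\end{pmatrix}(t,k)=\mathcal M\big(\beta t,\tfrac{k}{\beta}\big)\begin{pmatrix}\hat u_{0,\perp}\\ \hat E_{0,\perp}\\ \hat B_{0,\perp}\end{pmatrix}(k), \end{equation*} where, in the variables $\tau=\beta t$, $\xi=k/\beta$, the $9\times9$ matrix $\mathcal M(\tau,\xi)=(\mathcal M_{ij})_{1\le i,j\le 3}$ (with $3\times3$ blocks) is given, with $D=(\lambda_1-\lambda_2)(\lambda_2-\lambda_3)(\lambda_3-\lambda_1)$, by \begin{align*} \mathcal{M}_{11} &= \frac{1}{D}\Big[e^{\lambda_1\tau}(-\lambda_1)\tfrac{\lambda_2-\lambda_3}{\lambda_2+\lambda_3}+e^{\lambda_2\tau}(-\lambda_2)\tfrac{\lambda_3-\lambda_1}{\lambda_3+\lambda_1}+e^{\lambda_3\tau}(-\lambda_3)\tfrac{\lambda_1-\lambda_2}{\lambda_1+\lambda_2}\Big]\mathbf{I}_3,\\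 \mathcal{M}_{22} &= \frac{1}{D}\Big[e^{\lambda_1\tau}\lambda_1(\lambda_2^2-\lambda_3^2)+e^{\lambda_2\tau}\lambda_2(\lambda_3^2-\lambda_1^2)+e^{\lambda_3\tau}\lambda_3(\lambda_1^2-\lambda_2^2)\Big]\mathbf{I}_3,\\ \mathcal{M}_{33} &= \frac{1}{D}\Big[e^{\lambda_1\tau}(-|\xi|^2)\tfrac{\lambda_2^2-\lambda_3^2}{\lambda_1}+e^{\lambda_2\tau}(-|\xi|^2)\tfrac{\lambda_3^2-\lambda_1^2}{\lambda_2}+e^{\lambda_3\tau}(-|\xi|^2)\tfrac{\lambda_1^2-\lambda_2^2}{\lambda_3}\Big]\mathbf{I}_3,\\ \mathcal{M}_{12} &= \frac{1}{D}\Big[e^{\lambda_1\tau}\lambda_1(\lambda_2-\lambda_3)+e^{\lambda_2\tau}\lambda_2(\lambda_3-\lambda_1)+e^{\lambda_3\tau}\lambda_3(\lambda_1-\lambda_2)\Big]\mathbf{I}_3,\\ \mathcal{M}_{13} &= \frac{1}{D}\Big[e^{\lambda_1\tau}(\lambda_2-\lambda_3)+e^{\lambda_2\tau}(\lambda_3-\lambda_1)+e^{\lambda_3\tau}(\lambda_1-\lambda_2)\Big]\,i\xi\times,\\ \mathcal{M}_{23} &= \frac{1}{D}\Big[e^{\lambda_1\tau}(\lambda_2^2-\lambda_3^2)+e^{\lambda_2\tau}(\lambda_3^2-\lambda_1^2)+e^{\lambda_3\tau}(\lambda_1^2-\lambda_2^2)\Big]\,i\xi\times, \end{align*} and $\mathcal{M}_{21}=-\mathcal{M}_{12}$,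 $\mathcal{M}_{31}=\mathcal{M}_{13}$, $\mathcal{M}_{32}=-\mathcal{M}_{23}$. Here $\lambda_j=\lambda_j(\xi)$, $j=1,2,3$, are the roots of $z^3+a |\xi|^2 z^2 +(|\xi|^2+1)z+a |\xi|^4=0$, $z\in\mathbb{C}$, with $a=\mu\beta$.
   Context: $\gamma,\beta,\mu>0$ are constants; $\hat f(t,k)=\int_{\mathbb{R}^3}e^{-ik\cdot x}f(t,x)dx$; $\mathbf I_3$ is the $3\times 3$ identity and $i\xi\times$ denotes the linear map $w\mapsto i\xi\times w$ on $\mathbb{C}^3$. *)

From Stdlib Require Import Reals List.
From Coquelicot Require Import Coquelicot.
Open Scope R_scope.

Definition cexp (z : C) : C :=
  (exp (fst z) * cos (snd z), exp (fst z) * sin (snd z)).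

Definition R3 := (R * R * R)%type.
Definition V3 := (C * C * C)%type.

Definition r1 (k : R3) : R := fst (fst k).
Definition r2 (k : R3) : R := snd (fst k).
Definition r3 (k : R3) : R := snd k.
Definition c1 (v : V3) : C := fst (fst v).
Definition c2 (v : V3) : C := snd (fst v).
Definition c3 (v : V3) : C := snd v.
Definition mkV3 (a b c : C) : V3 := (a, b, c).

Definition rnorm (k : R3) : R := sqrt (r1 k ^ 2 + r2 k ^ 2 + r3 k ^ 2).
Definition rscal (c : R) (k : R3) : R3 := (c * r1 k, c * r2 k, c * r3 k).

Definition cv (k : R3) : V3 := mkV3 (RtoC (r1 k)) (RtoC (r2 k)) (RtoC (r3 k)).

Definition vadd (v w : V3) : V3 :=
  mkV3 (c1 v + c1 w)%C (c2 v + c2 w)%C (c3 v + c3 w)%C.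
Definition vscal (c : C) (v : V3) : V3 :=
  mkV3 (c * c1 v)%C (c * c2 v)%C (c * c3 v)%C.
Definition vopp (v : V3) : V3 := vscal (RtoC (-1)) v.
Definition vsub (v w : V3) : V3 := vadd v (vopp w).
(* bilinear (non-conjugated) dot product, as in k . u *)
Definition vdot (v w : V3) : C :=
  (c1 v * c1 w + c2 v * c2 w + c3 v * c3 w)%C.
Definition vcross (v w : V3) : V3 :=
  mkV3 (c2 v * c3 w - c3 v * c2 w)%C
       (c3 v * c1 w - c1 v * c3 w)%C
       (c1 v * c2 w - c2 v * c1 w)%C.

Definition Ci : C := (0, 1).

Definition icross (xi : R3) (w : V3) : V3 := vscal Ci (vcross (cv xi) w).

Definition perp (k : R3) (v : V3) : V3 :=
  let kt := cv (rscal (/ rnorm k) k) in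
  vsub v (vscal (vdot kt v) kt).

(* The scalar coefficients of the blocks of M(tau, xi); the arguments are
   the three roots l1 l2 l3, tau, and s = |xi|^2. *)
Section Coeffs.
Local Open Scope C_scope.
Variables (l1 l2 l3 : C) (tau : R) (s : R).
Definition Dl : C := (l1 - l2) * (l2 - l3) * (l3 - l1).
Definition ex (l : C) : C := cexp (RtoC tau * l).

Definition m11 : C :=
  (ex l1 * (- l1) * ((l2 - l3) / (l2 + l3))
 + ex l2 * (- l2) * ((l3 - l1) / (l3 + l1))
 + ex l3 * (- l3) * ((l1 - l2) / (l1 + l2))) / Dl.
Definition m22 : C :=
  (ex l1 * l1 * (l2 ^ 2 - l3 ^ 2)
 + ex l2 * l2 * (l3 ^ 2 - l1 ^ 2)
 + ex l3 * l3 * (l1 ^ 2 - l2 ^ 2)) / Dl.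
Definition m33 : C :=
  (ex l1 * (- RtoC s) * ((l2 ^ 2 - l3 ^ 2) / l1)
 + ex l2 * (- RtoC s) * ((l3 ^ 2 - l1 ^ 2) / l2)
 + ex l3 * (- RtoC s) * ((l1 ^ 2 - l2 ^ 2) / l3)) / Dl.
Definition m12 : C :=
  (ex l1 * l1 * (l2 - l3)
 + ex l2 * l2 * (l3 - l1)
 + ex l3 * l3 * (l1 - l2)) / Dl.
Definition m13 : C :=
  (ex l1 * (l2 - l3)
 + ex l2 * (l3 - l1)
 + ex l3 * (l1 - l2)) / Dl.
Definition m23 : C :=
  (ex l1 * (l2 ^ 2 - l3 ^ 2)
 + ex l2 * (l3 ^ 2 - l1 ^ 2)
 + ex l3 * (l1 ^ 2 - l2 ^ 2)) / Dl.
End Coeffs.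

Definition Mapply (l1 l2 l3 : C) (tau : R) (xi : R3) (u0 E0 B0 : V3)
  : V3 * V3 * V3 :=
  let s := rnorm xi ^ 2 in
  let A11 := m11 l1 l2 l3 tau in
  let A22 := m22 l1 l2 l3 tau in
  let A33 := m33 l1 l2 l3 tau s in
  let A12 := m12 l1 l2 l3 tau in
  let A13 := m13 l1 l2 l3 tau in
  let A23 := m23 l1 l2 l3 tau in
  ( vadd (vadd (vscal A11 u0) (vscal A12 E0)) (vscal A13 (icross xi B0)),
    vadd (vadd (vscal (- A12)%C u0) (vscal A22 E0)) (vscal A23 (icross xi B0)),
    vadd (vadd (vscal A13 (icross xi u0)) (vscal (- A23)%C (icross xi E0)))
         (vscal A33 B0) ).

Definition roots_of_cubic (a s : R) (l1 l2 l3 : C) : Prop :=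
  forall z : C,
    (z ^ 3 + RtoC (a * s) * z ^ 2 + RtoC (s + 1) * z + RtoC (a * s ^ 2))%C
    = ((z - l1) * (z - l2) * (z - l3))%C.

(* Fourier-side form of the linear system, hat f(t,k) = int e^{-ik.x} f(t,x) dx,
   so that grad -> i k, div -> i k ., curl -> i k x, Delta -> -|k|^2. *)
Definition ik (k : R3) : V3 := vscal Ci (cv k).

Definition fourier_system (gamma beta mu : R)
  (n : R -> R3 -> C) (u E B : R -> R3 -> V3) : Prop :=
  forall (t : R) (k : R3), 0 < t ->
    is_derive (fun s => n s k) t (- (RtoC gamma * vdot (ik k) (u t k)))%C /\
    is_derive (fun s => u s k) t
      (vopp (vadd (vadd (vscal (RtoC gamma * n t k)%C (ik k))
                        (vscal (RtoC beta) (E t k)))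
                  (vscal (RtoC (mu * rnorm k ^ 2)) (u t k)))) /\
    is_derive (fun s => E s k) t
      (vadd (vcross (ik k) (B t k)) (vscal (RtoC beta) (u t k))) /\
    is_derive (fun s => B s k) t (vopp (vcross (ik k) (E t k))) /\
    vdot (ik k) (E t k) = (- (RtoC (beta / gamma) * n t k))%C /\
    vdot (ik k) (B t k) = RtoC 0.

Definition initial_data {V : UniformSpace} (f : R -> R3 -> V) (f0 : R3 -> V) : Prop :=
  forall k : R3, f 0 k = f0 k /\ filterlim (fun s => f s k) (at_right 0) (locally (f0 k)).

From Stdlib Require Import Reals List Lra Lia Classical.
From Coquelicot Require Import Coquelicot.
Open Scope R_scope.

(* Write k = |k| a with |a| = 1 and xi = k / beta.  Projecting the system onto the plane
   orthogonal to a removes the density and the gradient terms; in the time tau = beta t the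
   transverse unknowns U = u_perp, E_perp and W = i xi x B_perp then solve the constant
   coefficient system U' = - p U - E_perp, E_perp' = U + W, W' = - |xi|^2 E_perp, with
   p = mu beta |xi|^2, whose characteristic polynomial is the cubic of the statement.
   For each root l, l U + l (l + p) E_perp + (l + p) W is a left eigenvector of this system,
   so it evolves by e^(l tau).  When the three roots are distinct these three modes determine
   (U, E_perp, W), and Lagrange interpolation over the roots (Sylvester's formula
   e^(tau A) = sum_j e^(l_j tau) adj (l_j - A) / q'(l_j)) produces the blocks of M; B_perp is
   recovered from W because (i xi x)^2 = |xi|^2 on transverse vectors.  Two roots coincide
   only where the discriminant of the cubic vanishes, a nonzero polynomial of degree 5 in
   |xi|^2, which leaves finitely many exceptional values of |k|. *)

Ltac Cring := match goal with |- ?a = ?b => change (@eq C a b); ring end.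

Lemma Cminus_eq_0 (a b : C) : (a - b = 0 -> a = b)%C.
Proof. intros H. transitivity ((a - b) + b)%C; [Cring|]. rewrite H; Cring. Qed.

Lemma Cminus_neq_0 (a b : C) : a <> b -> (a - b <> 0)%C.
Proof. intros H H'. apply H, Cminus_eq_0, H'. Qed.

Lemma Cmult_eq_0_r (a b : C) : (a * b = 0 -> a <> 0 -> b = 0)%C.
Proof. intros H Ha. transitivity (/ a * (a * b))%C; [field; exact Ha|]. rewrite H. Cring. Qed.

Lemma Cminus_eq_mult_0 (x y z K : C) : K = 0%C -> (x - y = z * K)%C -> x = y.
Proof. intros -> Hxy. apply Cminus_eq_0. rewrite Hxy. Cring. Qed.

(** * Linear differential equations for complex and vector valued functions *)

Definition lim0 (f : R -> R) (l : R) : Prop := filterlim f (at_right 0) (locally l).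

Lemma lim0_plus f g a b : lim0 f a -> lim0 g b -> lim0 (fun s => f s + g s) (a + b).
Proof. intros Hf Hg. exact (filterlim_comp_2 f g Rplus Hf Hg (@filterlim_plus _ R_NormedModule a b)). Qed.

Lemma lim0_mult f g a b : lim0 f a -> lim0 g b -> lim0 (fun s => f s * g s) (a * b).
Proof. intros Hf Hg. exact (filterlim_comp_2 f g Rmult Hf Hg (@filterlim_scal _ R_NormedModule a b)). Qed.

Lemma lim0_const a : lim0 (fun _ => a) a.
Proof. apply filterlim_const. Qed.

Lemma lim0_ext f g a : (forall s, 0 < s -> f s = g s) -> lim0 f a -> lim0 g a.
Proof.
  intros Hfg Hf. eapply filterlim_ext_loc; [|exact Hf].
  exists (mkposreal 1 Rlt_0_1). intros y _ Hy. exact (Hfg y Hy).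
Qed.

Lemma lim0_is_derive f d : is_derive f 0 d -> lim0 f (f 0).
Proof.
  intros Hd P HP. destruct (ex_derive_continuous f 0 (ex_intro _ d Hd) P HP) as [e He].
  exists e. intros y Hy _. exact (He y Hy).
Qed.

Lemma lim0_unique f a b : lim0 f a -> lim0 f b -> a = b.
Proof. exact (@filterlim_locally_unique R R_AbsRing R_NormedModule (at_right 0) _ f a b). Qed.

Lemma is_derive_Rmult (f g : R -> R) t df dg : is_derive f t df -> is_derive g t dg ->
  is_derive (fun s => f s * g s) t (df * g t + f t * dg).
Proof. intros Hf Hg. apply (is_derive_mult f g t df dg Hf Hg). intros; apply Rmult_comm. Qed.

Lemma is_derive_0_lim0 (h : R -> R) (m : R) : (forall t, 0 < t -> is_derive h t 0) -> lim0 h m ->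
  forall t, 0 < t -> h t = m.
Proof.
  intros Hh Hm.
  assert (Hconst : forall t, 0 < t -> h t = h 1).
  { intros t Ht. destruct (Rtotal_order t 1) as [lt|[->|gt]].
    - apply (eq_is_derive h t 1); [|exact lt]. intros x Hx. apply Hh. lra.
    - reflexivity.
    - symmetry. apply (eq_is_derive h 1 t); [|exact gt]. intros x Hx. apply Hh. lra. }
  intros t Ht. rewrite (Hconst t Ht).
  apply (lim0_unique h); [|exact Hm].
  eapply lim0_ext; [|apply lim0_const]. intros s Hs. symmetry. exact (Hconst s Hs).
Qed.

Definition is_Cderive (g : R -> C) (t : R) (d : C) : Prop :=
  is_derive (fun s => fst (g s)) t (fst d) /\ is_derive (fun s => snd (g s)) t (snd d).

Definition Clim0 (g : R -> C) (l : C) : Prop :=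
  lim0 (fun s => fst (g s)) (fst l) /\ lim0 (fun s => snd (g s)) (snd l).

Lemma is_Cderive_eq g t d d' : is_Cderive g t d -> d = d' -> is_Cderive g t d'.
Proof. intros H <-; exact H. Qed.

Lemma is_Cderive_ext f g t d : (forall s, f s = g s) -> is_Cderive f t d -> is_Cderive g t d.
Proof.
  intros Hfg [H1 H2]. split; eapply is_derive_ext; try eassumption; intros s; cbv beta; rewrite Hfg; reflexivity.
Qed.

Lemma is_Cderive_plus f g t a b : is_Cderive f t a -> is_Cderive g t b ->
  is_Cderive (fun s => f s + g s)%C t (a + b)%C.
Proof.
  intros [H1 H2] [H3 H4].
  split; cbn; [exact (is_derive_plus _ _ _ _ _ H1 H3) | exact (is_derive_plus _ _ _ _ _ H2 H4)].
Qed.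

Lemma is_Cderive_mult f g t a b : is_Cderive f t a -> is_Cderive g t b ->
  is_Cderive (fun s => f s * g s)%C t (a * g t + f t * b)%C.
Proof.
  intros [H1 H2] [H3 H4].
  pose proof (is_derive_Rmult _ _ _ _ _ H1 H3) as D11.
  pose proof (is_derive_Rmult _ _ _ _ _ H2 H4) as D22.
  pose proof (is_derive_Rmult _ _ _ _ _ H1 H4) as D12.
  pose proof (is_derive_Rmult _ _ _ _ _ H2 H3) as D21.
  split; cbn.
  - replace (_ - _ + _) with (fst a * fst (g t) + fst (f t) * fst b
                              - (snd a * snd (g t) + snd (f t) * snd b)) by ring.
    exact (is_derive_minus _ _ _ _ _ D11 D22).
  - replace (_ + _ + _) with (fst a * snd (g t) + fst (f t) * snd b
                              + (snd a * fst (g t) + snd (f t) * fst b)) by ring.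
    exact (is_derive_plus _ _ _ _ _ D12 D21).
Qed.

Lemma is_Cderive_const (c : C) t : is_Cderive (fun _ => c) t 0%C.
Proof. split; exact (@is_derive_const R_AbsRing R_NormedModule _ t). Qed.

Lemma is_Cderive_scal (c : C) f t a : is_Cderive f t a -> is_Cderive (fun s => c * f s)%C t (c * a)%C.
Proof.
  intros Hf. eapply is_Cderive_eq; [apply (is_Cderive_mult _ _ _ _ _ (is_Cderive_const c t) Hf)|Cring].
Qed.

Lemma is_Cderive_cexp (w : C) t :
  is_Cderive (fun s => cexp (RtoC s * w)) t (w * cexp (RtoC t * w))%C.
Proof.
  destruct w as [a b]. unfold cexp, RtoC, Cmult. split; cbn; auto_derive; try exact I; unfold Rminus; ring.
Qed.

Lemma Clim0_const (c : C) : Clim0 (fun _ => c) c.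
Proof. split; apply lim0_const. Qed.

Lemma Clim0_plus f g a b : Clim0 f a -> Clim0 g b -> Clim0 (fun s => f s + g s)%C (a + b)%C.
Proof. intros [H1 H2] [H3 H4]. split; apply lim0_plus; assumption. Qed.

Lemma Clim0_ext f g l : (forall s, f s = g s) -> Clim0 f l -> Clim0 g l.
Proof.
  intros Hfg [H1 H2]. split; eapply lim0_ext; try eassumption; intros s _; cbv beta; rewrite Hfg; reflexivity.
Qed.

Lemma Clim0_mult f g a b : Clim0 f a -> Clim0 g b -> Clim0 (fun s => f s * g s)%C (a * b)%C.
Proof.
  intros [H1 H2] [H3 H4]. split; cbn.
  - unfold Rminus. apply lim0_plus; [apply lim0_mult; assumption|].
    replace (- (snd a * snd b)) with ((-1) * (snd a * snd b)) by ring.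
    eapply lim0_ext; [|apply lim0_mult; [apply lim0_const | apply lim0_mult; eassumption]].
    intros s _; cbv beta; ring.
  - apply lim0_plus; apply lim0_mult; assumption.
Qed.

Lemma Clim0_scal (c : C) f a : Clim0 f a -> Clim0 (fun s => c * f s)%C (c * a)%C.
Proof. intros Hf. exact (Clim0_mult _ _ _ _ (Clim0_const c) Hf). Qed.

Lemma Clim0_cexp (w : C) : Clim0 (fun s => cexp (RtoC s * w)) 1%C.
Proof.
  destruct (is_Cderive_cexp w 0) as [D1 D2]. destruct w as [a b].
  apply lim0_is_derive in D1, D2. revert D1 D2. unfold cexp, RtoC, Cmult; cbn.
  rewrite !Rmult_0_l, Rminus_0_r, Rplus_0_r, exp_0, cos_0, sin_0, Rmult_1_l, Rmult_0_r.
  split; assumption.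
Qed.

Lemma cexp_add (z z' : C) : cexp (z + z') = (cexp z * cexp z')%C.
Proof.
  destruct z as [a b], z' as [a' b']. unfold cexp, Cmult, Cplus; cbn.
  rewrite exp_plus, cos_plus, sin_plus. f_equal; ring.
Qed.

Lemma is_Cderive_0_Clim0 (g : R -> C) (l : C) :
  (forall t, 0 < t -> is_Cderive g t 0%C) -> Clim0 g l -> forall t, 0 < t -> g t = l.
Proof.
  intros Hg [L1 L2] t Ht. apply injective_projections.
  - exact (is_derive_0_lim0 _ _ (fun t Ht => proj1 (Hg t Ht)) L1 t Ht).
  - exact (is_derive_0_lim0 _ _ (fun t Ht => proj2 (Hg t Ht)) L2 t Ht).
Qed.

(* Integrating factor: [e^(-sw) g(s)] has zero derivative and tends to [g0] at [0+]. *)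
Lemma linear_ode_C (g : R -> C) (g0 w : C) :
  (forall t, 0 < t -> is_Cderive g t (w * g t)%C) -> Clim0 g g0 ->
  forall t, 0 < t -> g t = (cexp (RtoC t * w) * g0)%C.
Proof.
  intros Hg Hg0.
  assert (Hconst : forall t, 0 < t -> (cexp (RtoC t * - w) * g t)%C = g0).
  { apply is_Cderive_0_Clim0.
    - intros t Ht. eapply is_Cderive_eq.
      + apply is_Cderive_mult; [apply is_Cderive_cexp | exact (Hg t Ht)].
      + cbv beta; Cring.
    - replace g0 with (1 * g0)%C by ring. exact (Clim0_mult _ _ _ _ (Clim0_cexp (- w)) Hg0). }
  intros t Ht. rewrite <- (Hconst t Ht), Cmult_assoc, <- cexp_add.
  replace (RtoC t * w + RtoC t * - w)%C with (RtoC 0) by (unfold RtoC; apply injective_projections; cbn; ring).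
  unfold cexp, RtoC; cbn. rewrite exp_0, cos_0, sin_0, Rmult_1_l, Rmult_0_r.
  apply injective_projections; cbn; ring.
Qed.

Definition is_Vderive (f : R -> V3) (t : R) (d : V3) : Prop :=
  is_Cderive (fun s => c1 (f s)) t (c1 d) /\ is_Cderive (fun s => c2 (f s)) t (c2 d) /\
  is_Cderive (fun s => c3 (f s)) t (c3 d).

Definition Vlim0 (f : R -> V3) (l : V3) : Prop :=
  Clim0 (fun s => c1 (f s)) (c1 l) /\ Clim0 (fun s => c2 (f s)) (c2 l) /\ Clim0 (fun s => c3 (f s)) (c3 l).

Lemma is_derive_fst {U V : NormedModule R_AbsRing} (f : R -> U * V) t (d : U * V) :
  @is_derive R_AbsRing (prod_NormedModule _ U V) f t d -> is_derive (fun s => fst (f s)) t (fst d).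
Proof. intros H. exact (filterdiff_comp' f fst t _ fst H (filterdiff_linear _ is_linear_fst)). Qed.

Lemma is_derive_snd {U V : NormedModule R_AbsRing} (f : R -> U * V) t (d : U * V) :
  @is_derive R_AbsRing (prod_NormedModule _ U V) f t d -> is_derive (fun s => snd (f s)) t (snd d).
Proof. intros H. exact (filterdiff_comp' f snd t _ snd H (filterdiff_linear _ is_linear_snd)). Qed.

Lemma filterlim_fst {T} {U V : UniformSpace} F (f : T -> U * V) l :
  filterlim f F (locally l) -> filterlim (fun s => fst (f s)) F (locally (fst l)).
Proof.
  intros H. eapply filterlim_comp; [exact H|].
  intros P [e He]. exists e. intros y [Hy _]. exact (He _ Hy).
Qed.

Lemma filterlim_snd {T} {U V : UniformSpace} F (f : T -> U * V) l :
  filterlim f F (locally l) -> filterlim (fun s => snd (f s)) F (locally (snd l)).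
Proof.
  intros H. eapply filterlim_comp; [exact H|].
  intros P [e He]. exists e. intros y [_ Hy]. exact (He _ Hy).
Qed.

Lemma is_Vderive_is_derive (f : R -> V3) t d : is_derive f t d -> is_Vderive f t d.
Proof.
  intros H.
  pose proof (is_derive_fst _ _ _ H) as H12. pose proof (is_derive_snd _ _ _ H) as H3.
  pose proof (is_derive_fst _ _ _ H12) as H1. pose proof (is_derive_snd _ _ _ H12) as H2.
  unfold is_Vderive, is_Cderive, c1, c2, c3; cbn in *.
  refine (conj (conj _ _) (conj (conj _ _) (conj _ _))).
  - exact (is_derive_fst _ _ _ H1).
  - exact (is_derive_snd _ _ _ H1).
  - exact (is_derive_fst _ _ _ H2).
  - exact (is_derive_snd _ _ _ H2).
  - exact (is_derive_fst _ _ _ H3).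
  - exact (is_derive_snd _ _ _ H3).
Qed.

Lemma Vlim0_filterlim (f : R -> V3) l : filterlim f (at_right 0) (locally l) -> Vlim0 f l.
Proof.
  intros H.
  pose proof (filterlim_fst _ _ _ H) as H12. pose proof (filterlim_snd _ _ _ H) as H3.
  pose proof (filterlim_fst _ _ _ H12) as H1. pose proof (filterlim_snd _ _ _ H12) as H2.
  unfold Vlim0, Clim0, lim0, c1, c2, c3; cbn in *.
  refine (conj (conj _ _) (conj (conj _ _) (conj _ _))).
  - exact (filterlim_fst _ _ _ H1).
  - exact (filterlim_snd _ _ _ H1).
  - exact (filterlim_fst _ _ _ H2).
  - exact (filterlim_snd _ _ _ H2).
  - exact (filterlim_fst _ _ _ H3).
  - exact (filterlim_snd _ _ _ H3).
Qed.

Lemma is_Vderive_eq f t d d' : is_Vderive f t d -> d = d' -> is_Vderive f t d'.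
Proof. intros H <-; exact H. Qed.

Lemma is_Vderive_add f g t a b : is_Vderive f t a -> is_Vderive g t b ->
  is_Vderive (fun s => vadd (f s) (g s)) t (vadd a b).
Proof. intros (H1 & H2 & H3) (H4 & H5 & H6). split; [|split]; apply is_Cderive_plus; assumption. Qed.

Lemma is_Vderive_scal c f t a : is_Vderive f t a -> is_Vderive (fun s => vscal c (f s)) t (vscal c a).
Proof. intros (H1 & H2 & H3). split; [|split]; apply is_Cderive_scal; assumption. Qed.

Lemma Vlim0_add f g a b : Vlim0 f a -> Vlim0 g b -> Vlim0 (fun s => vadd (f s) (g s)) (vadd a b).
Proof. intros (H1 & H2 & H3) (H4 & H5 & H6). split; [|split]; apply Clim0_plus; assumption. Qed.

Lemma Vlim0_scal c f a : Vlim0 f a -> Vlim0 (fun s => vscal c (f s)) (vscal c a).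
Proof. intros (H1 & H2 & H3). split; [|split]; apply Clim0_scal; assumption. Qed.

Definition matrix_map (A : V3 -> V3) : Prop :=
  exists r1 r2 r3 : V3, forall v, A v = mkV3 (vdot r1 v) (vdot r2 v) (vdot r3 v).

Lemma is_Vderive_matrix_map A f t d : matrix_map A -> is_Vderive f t d ->
  is_Vderive (fun s => A (f s)) t (A d).
Proof.
  intros (r1 & r2 & r3 & HA) (H1 & H2 & H3). rewrite HA.
  assert (Hdot : forall r, is_Cderive (fun s => vdot r (f s)) t (vdot r d)).
  { intros r. unfold vdot.
    repeat apply is_Cderive_plus; apply is_Cderive_scal; assumption. }
  split; [|split]; eapply is_Cderive_ext; try apply Hdot; intros s; rewrite HA; reflexivity.
Qed.

Lemma Vlim0_matrix_map A f l : matrix_map A -> Vlim0 f l -> Vlim0 (fun s => A (f s)) (A l).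
Proof.
  intros (r1 & r2 & r3 & HA) (H1 & H2 & H3). rewrite HA.
  assert (Hdot : forall r, Clim0 (fun s => vdot r (f s)) (vdot r l)).
  { intros r. unfold vdot.
    repeat apply Clim0_plus; apply Clim0_scal; assumption. }
  split; [|split]; eapply Clim0_ext; try apply Hdot; intros s; rewrite HA; reflexivity.
Qed.

Lemma V3_eq (v w : V3) : c1 v = c1 w -> c2 v = c2 w -> c3 v = c3 w -> v = w.
Proof. destruct v as [[a b] c], w as [[a' b'] c']. unfold c1, c2, c3; cbn. intros -> -> ->. reflexivity. Qed.

Lemma linear_ode_V (f : R -> V3) (f0 : V3) (w : C) :
  (forall t, 0 < t -> is_Vderive f t (vscal w (f t))) -> Vlim0 f f0 ->
  forall t, 0 < t -> f t = vscal (cexp (RtoC t * w)) f0.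
Proof.
  intros Hf (L1 & L2 & L3) t Ht.
  apply V3_eq; cbn.
  - exact (linear_ode_C _ _ _ (fun t Ht => proj1 (Hf t Ht)) L1 t Ht).
  - exact (linear_ode_C _ _ _ (fun t Ht => proj1 (proj2 (Hf t Ht))) L2 t Ht).
  - exact (linear_ode_C _ _ _ (fun t Ht => proj2 (proj2 (Hf t Ht))) L3 t Ht).
Qed.

(** * The transverse projection *)

Definition proj_perp (a : R3) (v : V3) : V3 := vsub v (vscal (vdot (cv a) v) (cv a)).
Definition rnorm2 (a : R3) : R := r1 a * r1 a + r2 a * r2 a + r3 a * r3 a.

Ltac vring :=
  apply V3_eq;
  unfold proj_perp, vsub, vopp, icross, ik, vadd, vscal, vdot, vcross, cv, rscal, mkV3;
  cbn [c1 c2 c3 fst snd r1 r2 r3]; rewrite ?RtoC_mult; Cring.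

Lemma matrix_map_proj_perp a : matrix_map (proj_perp a).
Proof.
  exists (mkV3 (1 - RtoC (r1 a) * RtoC (r1 a)) (- RtoC (r1 a) * RtoC (r2 a)) (- RtoC (r1 a) * RtoC (r3 a)))%C,
         (mkV3 (- RtoC (r2 a) * RtoC (r1 a)) (1 - RtoC (r2 a) * RtoC (r2 a)) (- RtoC (r2 a) * RtoC (r3 a)))%C,
         (mkV3 (- RtoC (r3 a) * RtoC (r1 a)) (- RtoC (r3 a) * RtoC (r2 a)) (1 - RtoC (r3 a) * RtoC (r3 a)))%C.
  intros v. vring.
Qed.

Lemma matrix_map_icross xi : matrix_map (icross xi).
Proof.
  exists (mkV3 0 (- Ci * RtoC (r3 xi)) (Ci * RtoC (r2 xi)))%C,
         (mkV3 (Ci * RtoC (r3 xi)) 0 (- Ci * RtoC (r1 xi)))%C,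
         (mkV3 (- Ci * RtoC (r2 xi)) (Ci * RtoC (r1 xi)) 0)%C.
  intros v. vring.
Qed.

Lemma proj_perp_add a v w : proj_perp a (vadd v w) = vadd (proj_perp a v) (proj_perp a w).
Proof. vring. Qed.

Lemma proj_perp_scal a c v : proj_perp a (vscal c v) = vscal c (proj_perp a v).
Proof. vring. Qed.

Lemma proj_perp_opp a v : proj_perp a (vopp v) = vopp (proj_perp a v).
Proof. vring. Qed.

Lemma icross_add xi v w : icross xi (vadd v w) = vadd (icross xi v) (icross xi w).
Proof. vring. Qed.

Lemma icross_scal xi c v : icross xi (vscal c v) = vscal c (icross xi v).
Proof. vring. Qed.

Lemma icross_opp xi v : icross xi (vopp v) = vopp (icross xi v).
Proof. vring. Qed.

Lemma RtoC_rnorm2 a : RtoC (rnorm2 a) =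
  (RtoC (r1 a) * RtoC (r1 a) + RtoC (r2 a) * RtoC (r2 a) + RtoC (r3 a) * RtoC (r3 a))%C.
Proof. unfold rnorm2. rewrite <- !RtoC_mult, <- !RtoC_plus. reflexivity. Qed.

Lemma eq_mod_unit a (x y z : C) : rnorm2 a = 1 ->
  (x - y = z * (RtoC (r1 a) * RtoC (r1 a) + RtoC (r2 a) * RtoC (r2 a) + RtoC (r3 a) * RtoC (r3 a) - 1))%C ->
  x = y.
Proof.
  intros Ha. apply Cminus_eq_mult_0. rewrite <- RtoC_rnorm2, Ha. Cring.
Qed.

Lemma proj_perp_ik_parallel a r : rnorm2 a = 1 -> proj_perp a (ik (rscal r a)) = mkV3 0 0 0.
Proof.
  intros Ha. apply V3_eq;
  [ apply (eq_mod_unit a _ _ (- (Ci * RtoC r * RtoC (r1 a)))%C Ha)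
  | apply (eq_mod_unit a _ _ (- (Ci * RtoC r * RtoC (r2 a)))%C Ha)
  | apply (eq_mod_unit a _ _ (- (Ci * RtoC r * RtoC (r3 a)))%C Ha)];
  unfold proj_perp, vsub, vopp, ik, vadd, vscal, vdot, cv, rscal, mkV3;
  cbn [c1 c2 c3 fst snd r1 r2 r3]; rewrite ?RtoC_mult; Cring.
Qed.

Lemma proj_perp_cross_parallel a r w :
  proj_perp a (vcross (ik (rscal r a)) w) = vcross (ik (rscal r a)) w.
Proof. vring. Qed.

Lemma cross_parallel_proj_perp a r w :
  vcross (ik (rscal r a)) (proj_perp a w) = vcross (ik (rscal r a)) w.
Proof. vring. Qed.

Lemma icross_icross xi v :
  icross xi (icross xi v) = vscal (RtoC (-1)) (vcross (cv xi) (vcross (cv xi) v)).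
Proof.
  assert (Hi : (Ci * Ci + 1)%C = 0%C) by (unfold Ci, Cmult, Cplus; apply injective_projections; cbn; ring).
  apply V3_eq;
  [ apply (Cminus_eq_mult_0 _ _ (c1 (vcross (cv xi) (vcross (cv xi) v))) _ Hi)
  | apply (Cminus_eq_mult_0 _ _ (c2 (vcross (cv xi) (vcross (cv xi) v))) _ Hi)
  | apply (Cminus_eq_mult_0 _ _ (c3 (vcross (cv xi) (vcross (cv xi) v))) _ Hi)];
  unfold icross, vscal, vcross, cv, mkV3; cbn [c1 c2 c3 fst snd]; Cring.
Qed.

Lemma icross_icross_proj_perp a c w : rnorm2 a = 1 ->
  icross (rscal c a) (icross (rscal c a) (proj_perp a w)) = vscal (RtoC (c * c)) (proj_perp a w).
Proof.
  intros Ha. rewrite icross_icross. apply V3_eq;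
  [ apply (eq_mod_unit a _ _ (RtoC c * RtoC c * c1 w)%C Ha)
  | apply (eq_mod_unit a _ _ (RtoC c * RtoC c * c2 w)%C Ha)
  | apply (eq_mod_unit a _ _ (RtoC c * RtoC c * c3 w)%C Ha)];
  unfold proj_perp, vsub, vopp, vadd, vscal, vdot, vcross, cv, rscal, mkV3;
  cbn [c1 c2 c3 fst snd r1 r2 r3]; rewrite ?RtoC_mult; Cring.
Qed.

(** * Transverse modes *)

Definition char_poly (p s l : C) : C := (l ^ 3 + p * l ^ 2 + (s + 1) * l + p * s)%C.

Definition mode (p l : C) (U E W : V3) : V3 :=
  vadd (vadd (vscal l U) (vscal (l * (l + p))%C E)) (vscal (l + p)%C W).

Lemma mode_scal p l c U E W : mode p l (vscal c U) (vscal c E) (vscal c W) = vscal c (mode p l U E W).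
Proof. unfold mode. vring. Qed.

Lemma mode_eigen p s l U E W : char_poly p s l = 0%C ->
  mode p l (vopp (vadd (vscal p U) E)) (vadd U W) (vscal (- s)%C E) = vscal l (mode p l U E W).
Proof.
  intros Hl. unfold mode. apply V3_eq;
  [ apply (Cminus_eq_mult_0 _ _ (- c1 E)%C _ Hl) | apply (Cminus_eq_mult_0 _ _ (- c2 E)%C _ Hl)
  | apply (Cminus_eq_mult_0 _ _ (- c3 E)%C _ Hl)];
  unfold char_poly, vopp, vadd, vscal, mkV3; cbn [c1 c2 c3 fst snd]; Cring.
Qed.

Lemma rnorm_rscal_unit a c : rnorm2 a = 1 -> rnorm (rscal c a) ^ 2 = c ^ 2.
Proof.
  intros Ha. unfold rnorm2 in Ha. unfold rnorm, rscal, r1, r2, r3 in *; cbn [fst snd] in *.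
  rewrite pow2_sqrt; nra.
Qed.

Lemma transverse_u_rhs gamma beta mu c a nn u E : rnorm2 a = 1 ->
  proj_perp a (vopp (vadd (vadd (vscal (RtoC gamma * nn)%C (ik (rscal (beta * c) a)))
                                (vscal (RtoC beta) E))
                          (vscal (RtoC (mu * rnorm (rscal (beta * c) a) ^ 2)) u)))
  = vscal (RtoC beta) (vopp (vadd (vscal (RtoC (mu * beta * (c * c))) (proj_perp a u)) (proj_perp a E))).
Proof.
  intros Ha. rewrite rnorm_rscal_unit by exact Ha.
  rewrite proj_perp_opp, !proj_perp_add, !proj_perp_scal, proj_perp_ik_parallel by exact Ha.
  replace (mu * (beta * c) ^ 2) with (beta * (mu * beta * (c * c))) by ring.
  vring.
Qed.

Lemma transverse_E_rhs beta c a u B :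
  proj_perp a (vadd (vcross (ik (rscal (beta * c) a)) B) (vscal (RtoC beta) u))
  = vscal (RtoC beta) (vadd (proj_perp a u) (icross (rscal c a) (proj_perp a B))).
Proof. vring. Qed.

Lemma transverse_W_rhs beta c a E : rnorm2 a = 1 ->
  icross (rscal c a) (proj_perp a (vopp (vcross (ik (rscal (beta * c) a)) E)))
  = vscal (RtoC beta) (vscal (- RtoC (c * c))%C (proj_perp a E)).
Proof.
  intros Ha.
  rewrite proj_perp_opp, proj_perp_cross_parallel, <- cross_parallel_proj_perp.
  replace (vcross (ik (rscal (beta * c) a)) (proj_perp a E))
    with (vscal (RtoC beta) (icross (rscal c a) (proj_perp a E))) by vring.
  rewrite icross_opp, icross_scal, icross_icross_proj_perp by exact Ha.
  vring.
Qed.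

Section TransverseModes.

Variables (gamma beta mu c : R) (a : R3).
Variables (n : R -> R3 -> C) (u E B : R -> R3 -> V3) (u0 E0 B0 : R3 -> V3).
Hypotheses (Hsys : fourier_system gamma beta mu n u E B) (Ha : rnorm2 a = 1).

(* The wave vector is [k = beta c a]; [c a] is [xi] of the statement and [p = mu beta |xi|^2]. *)
Definition transverse_mode (l : C) (t : R) : V3 :=
  let k := rscal (beta * c) a in
  mode (RtoC (mu * beta * (c * c))) l
       (proj_perp a (u t k)) (proj_perp a (E t k)) (icross (rscal c a) (proj_perp a (B t k))).

Lemma is_Vderive_transverse_mode l t : 0 < t ->
  char_poly (RtoC (mu * beta * (c * c))) (RtoC (c * c)) l = 0%C ->
  is_Vderive (transverse_mode l) t (vscal (RtoC beta * l)%C (transverse_mode l t)).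
Proof.
  intros Ht Hl. set (k := rscal (beta * c) a).
  assert (Hrhs : forall U E' W,
    mode (RtoC (mu * beta * (c * c))) l
      (vscal (RtoC beta) (vopp (vadd (vscal (RtoC (mu * beta * (c * c))) U) E')))
      (vscal (RtoC beta) (vadd U W)) (vscal (RtoC beta) (vscal (- RtoC (c * c))%C E'))
    = vscal (RtoC beta * l)%C (mode (RtoC (mu * beta * (c * c))) l U E' W)).
  { intros U E' W. rewrite mode_scal, mode_eigen by exact Hl. vring. }
  destruct (Hsys t k Ht) as (_ & Du & DE & DB & _).
  apply is_Vderive_is_derive in Du, DE, DB.
  eapply is_Vderive_eq.
  - unfold transverse_mode, mode.
    apply is_Vderive_add; [apply is_Vderive_add|]; apply is_Vderive_scal.
    + apply (is_Vderive_matrix_map _ _ _ _ (matrix_map_proj_perp a) Du).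
    + apply (is_Vderive_matrix_map _ _ _ _ (matrix_map_proj_perp a) DE).
    + eapply (is_Vderive_matrix_map _ _ _ _ (matrix_map_icross _)).
      apply (is_Vderive_matrix_map _ _ _ _ (matrix_map_proj_perp a) DB).
  - unfold k. rewrite transverse_u_rhs, transverse_E_rhs, transverse_W_rhs by assumption.
    apply Hrhs.
Qed.

Hypotheses (Hu : initial_data u u0) (HE : initial_data E E0) (HB : initial_data B B0).

Lemma transverse_mode_evolution l t : 0 < t ->
  char_poly (RtoC (mu * beta * (c * c))) (RtoC (c * c)) l = 0%C ->
  transverse_mode l t =
  vscal (ex (beta * t) l)
    (mode (RtoC (mu * beta * (c * c))) l (proj_perp a (u0 (rscal (beta * c) a)))
          (proj_perp a (E0 (rscal (beta * c) a)))
          (icross (rscal c a) (proj_perp a (B0 (rscal (beta * c) a))))).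
Proof.
  intros Ht Hl.
  replace (ex (beta * t) l) with (cexp (RtoC t * (RtoC beta * l)))
    by (unfold ex; f_equal; rewrite RtoC_mult; Cring).
  apply (linear_ode_V (transverse_mode l)); [| |exact Ht].
  - intros s Hs. exact (is_Vderive_transverse_mode l s Hs Hl).
  - set (k := rscal (beta * c) a).
    unfold transverse_mode, mode.
    apply Vlim0_add; [apply Vlim0_add|]; apply Vlim0_scal.
    + apply (Vlim0_matrix_map _ _ _ (matrix_map_proj_perp a)), Vlim0_filterlim, (proj2 (Hu k)).
    + apply (Vlim0_matrix_map _ _ _ (matrix_map_proj_perp a)), Vlim0_filterlim, (proj2 (HE k)).
    + apply (Vlim0_matrix_map _ _ _ (matrix_map_icross _)).
      apply (Vlim0_matrix_map _ _ _ (matrix_map_proj_perp a)), Vlim0_filterlim, (proj2 (HB k)).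
Qed.

End TransverseModes.

(** * Sylvester's formula for the transverse system *)

Open Scope C_scope.

Definition mode_form (p l x y z : C) : C := l * x + l * (l + p) * y + (l + p) * z.

(* The rows of [adj (l I - A)], where [A] is the matrix of the transverse system
   [x' = - p x - y], [y' = x + z], [z' = - S y] (time [beta t]) applied to [(x, y, z)]. *)
Definition adj_row1 (S l x y z : C) : C := (l ^ 2 + S) * x - l * y - z.
Definition adj_row2 (p l x y z : C) : C := l * x + l * (l + p) * y + (l + p) * z.
Definition adj_row3 (p S l x y z : C) : C := - S * x - S * (l + p) * y + (l ^ 2 + p * l + 1) * z.

Definition char_deriv (p S l : C) : C := 3 * l ^ 2 + 2 * p * l + S + 1.

Lemma mode_form_adj (p S l m x y z : C) :
  (l - m) * mode_form p m (adj_row1 S l x y z) (adj_row2 p l x y z) (adj_row3 p S l x y z)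
  = char_poly p S l * mode_form p m x y z - char_poly p S m * mode_form p l x y z.
Proof. unfold mode_form, adj_row1, adj_row2, adj_row3, char_poly. ring. Qed.

Lemma mode_form_adj_diag (p S l x y z : C) :
  mode_form p l (adj_row1 S l x y z) (adj_row2 p l x y z) (adj_row3 p S l x y z)
  = char_deriv p S l * mode_form p l x y z - char_poly p S l * (x + (2 * l + p) * y + z).
Proof. unfold mode_form, adj_row1, adj_row2, adj_row3, char_poly, char_deriv. ring. Qed.

Definition lagrange (f : C -> C) (e1 e2 e3 l1 l2 l3 : C) : C :=
  e1 * f l1 / ((l1 - l2) * (l1 - l3)) + e2 * f l2 / ((l2 - l3) * (l2 - l1))
  + e3 * f l3 / ((l3 - l1) * (l3 - l2)).

Lemma lagrange_cycle f e1 e2 e3 l1 l2 l3 : lagrange f e1 e2 e3 l1 l2 l3 = lagrange f e2 e3 e1 l2 l3 l1.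
Proof. unfold lagrange. ring. Qed.

Lemma char_poly_vieta p S l1 l2 l3 :
  (forall z, char_poly p S z = (z - l1) * (z - l2) * (z - l3)) ->
  l1 + l2 + l3 = - p /\ l1 * l2 + l1 * l3 + l2 * l3 = S + 1 /\ l1 * l2 * l3 = - (p * S).
Proof.
  intros Hf.
  set (d := fun z => char_poly p S z - (z - l1) * (z - l2) * (z - l3)).
  assert (Hd : forall z, d z = 0) by (intros z; unfold d; rewrite Hf; ring).
  assert (H2 : (2 : C) <> 0) by (intros H; apply (f_equal fst) in H; cbn in H; lra).
  split; [|split]; apply Cminus_eq_0.
  - apply (Cmult_eq_0_r 2); [|exact H2].
    transitivity (d 1 + d (-1) - 2 * d 0); [unfold d, char_poly; ring|].
    rewrite !Hd. ring.
  - apply (Cmult_eq_0_r 2); [|exact H2].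
    transitivity (d (-1) - d 1); [unfold d, char_poly; ring|].
    rewrite !Hd. ring.
  - transitivity (d 0); [unfold d, char_poly; ring|]. apply Hd.
Qed.

Lemma char_poly_root p S l1 l2 l3 :
  (forall z, char_poly p S z = (z - l1) * (z - l2) * (z - l3)) -> char_poly p S l1 = 0.
Proof. intros Hf. rewrite Hf. ring. Qed.

Lemma char_deriv_root p S l1 l2 l3 :
  (forall z, char_poly p S z = (z - l1) * (z - l2) * (z - l3)) ->
  char_deriv p S l1 = (l1 - l2) * (l1 - l3).
Proof.
  intros Hf. destruct (char_poly_vieta _ _ _ _ _ Hf) as (H1 & H2 & _).
  assert (Hp : p = - (l1 + l2 + l3)) by (rewrite H1; ring).
  assert (HS : S = l1 * l2 + l1 * l3 + l2 * l3 - 1) by (rewrite H2; ring).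
  subst p S. unfold char_deriv. ring.
Qed.

Lemma char_poly_cycle p S l1 l2 l3 :
  (forall z, char_poly p S z = (z - l1) * (z - l2) * (z - l3)) ->
  forall z, char_poly p S z = (z - l2) * (z - l3) * (z - l1).
Proof. intros Hf z. rewrite Hf. ring. Qed.

Section Sylvester.

Variables (p S l1 l2 l3 e1 e2 e3 x0 y0 z0 : C).
Hypotheses (Hf : forall z, char_poly p S z = (z - l1) * (z - l2) * (z - l3))
  (D12 : l1 <> l2) (D23 : l2 <> l3) (D13 : l1 <> l3).

Lemma mode_form_adj_root l m : char_poly p S l = 0 -> char_poly p S m = 0 -> l <> m ->
  mode_form p m (adj_row1 S l x0 y0 z0) (adj_row2 p l x0 y0 z0) (adj_row3 p S l x0 y0 z0) = 0.
Proof.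
  intros Hl Hm Hlm. apply (Cmult_eq_0_r (l - m)); [|apply Cminus_neq_0, Hlm].
  rewrite mode_form_adj, Hl, Hm. ring.
Qed.

Lemma lagrange_mode_form :
  mode_form p l1 (lagrange (fun l => adj_row1 S l x0 y0 z0) e1 e2 e3 l1 l2 l3)
                 (lagrange (fun l => adj_row2 p l x0 y0 z0) e1 e2 e3 l1 l2 l3)
                 (lagrange (fun l => adj_row3 p S l x0 y0 z0) e1 e2 e3 l1 l2 l3)
  = e1 * mode_form p l1 x0 y0 z0.
Proof.
  pose proof (char_poly_root _ _ _ _ _ Hf) as Hq1.
  pose proof (char_poly_root _ _ _ _ _ (char_poly_cycle _ _ _ _ _ Hf)) as Hq2.
  pose proof (char_poly_root _ _ _ _ _ (char_poly_cycle _ _ _ _ _ (char_poly_cycle _ _ _ _ _ Hf))) as Hq3.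
  set (F := fun l => mode_form p l1 (adj_row1 S l x0 y0 z0) (adj_row2 p l x0 y0 z0) (adj_row3 p S l x0 y0 z0)).
  transitivity (e1 * F l1 / ((l1 - l2) * (l1 - l3)) + e2 * F l2 / ((l2 - l3) * (l2 - l1))
                + e3 * F l3 / ((l3 - l1) * (l3 - l2))).
  { unfold F, lagrange, mode_form, Cdiv. ring. }
  unfold F at 1. rewrite mode_form_adj_diag, Hq1, (char_deriv_root _ _ _ _ _ Hf).
  unfold F. rewrite !mode_form_adj_root by auto.
  field. repeat split; apply Cminus_neq_0; auto.
Qed.

End Sylvester.

Lemma mode_form_eq_0 (p l1 l2 l3 x y z : C) : p <> 0 -> l1 <> l2 -> l2 <> l3 -> l1 <> l3 ->
  mode_form p l1 x y z = 0 -> mode_form p l2 x y z = 0 -> mode_form p l3 x y z = 0 ->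
  x = 0 /\ y = 0 /\ z = 0.
Proof.
  intros Hp D12 D23 D13 F1 F2 F3.
  assert (K12 : y * (l1 + l2) + (x + p * y + z) = 0).
  { apply (Cmult_eq_0_r (l1 - l2)); [|apply Cminus_neq_0; auto].
    transitivity (mode_form p l1 x y z - mode_form p l2 x y z); [unfold mode_form; ring|].
    rewrite F1, F2; ring. }
  assert (K13 : y * (l1 + l3) + (x + p * y + z) = 0).
  { apply (Cmult_eq_0_r (l1 - l3)); [|apply Cminus_neq_0; auto].
    transitivity (mode_form p l1 x y z - mode_form p l3 x y z); [unfold mode_form; ring|].
    rewrite F1, F3; ring. }
  assert (Hy : y = 0).
  { apply (Cmult_eq_0_r (l2 - l3)); [|apply Cminus_neq_0; auto].
    transitivity ((y * (l1 + l2) + (x + p * y + z)) - (y * (l1 + l3) + (x + p * y + z))); [ring|].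
    rewrite K12, K13; ring. }
  subst y.
  assert (Hz : z = 0).
  { apply (Cmult_eq_0_r p); [|exact Hp].
    transitivity (mode_form p l1 x 0 z - l1 * (0 * (l1 + l2) + (x + p * 0 + z))); [unfold mode_form; ring|].
    rewrite F1, K12; ring. }
  subst z. split; [|split]; [|reflexivity|reflexivity].
  transitivity (0 * (l1 + l2) + (x + p * 0 + 0)); [ring|]. exact K12.
Qed.

Lemma sylvester_solution (p S l1 l2 l3 e1 e2 e3 x y z x0 y0 z0 : C) :
  (forall z, char_poly p S z = (z - l1) * (z - l2) * (z - l3)) ->
  l1 <> l2 -> l2 <> l3 -> l1 <> l3 -> p <> 0 ->
  mode_form p l1 x y z = e1 * mode_form p l1 x0 y0 z0 ->
  mode_form p l2 x y z = e2 * mode_form p l2 x0 y0 z0 ->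
  mode_form p l3 x y z = e3 * mode_form p l3 x0 y0 z0 ->
  x = lagrange (fun l => adj_row1 S l x0 y0 z0) e1 e2 e3 l1 l2 l3 /\
  y = lagrange (fun l => adj_row2 p l x0 y0 z0) e1 e2 e3 l1 l2 l3 /\
  z = lagrange (fun l => adj_row3 p S l x0 y0 z0) e1 e2 e3 l1 l2 l3.
Proof.
  intros Hf D12 D23 D13 Hp F1 F2 F3.
  pose proof (char_poly_cycle _ _ _ _ _ Hf) as Hf2.
  pose proof (char_poly_cycle _ _ _ _ _ Hf2) as Hf3.
  set (X := lagrange (fun l => adj_row1 S l x0 y0 z0) e1 e2 e3 l1 l2 l3).
  set (Y := lagrange (fun l => adj_row2 p l x0 y0 z0) e1 e2 e3 l1 l2 l3).
  set (Z := lagrange (fun l => adj_row3 p S l x0 y0 z0) e1 e2 e3 l1 l2 l3).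
  assert (G1 := lagrange_mode_form p S l1 l2 l3 e1 e2 e3 x0 y0 z0 Hf D12 D23 D13).
  assert (G2 := lagrange_mode_form p S l2 l3 l1 e2 e3 e1 x0 y0 z0 Hf2 D23
                  (not_eq_sym D13) (not_eq_sym D12)).
  assert (G3 := lagrange_mode_form p S l3 l1 l2 e3 e1 e2 x0 y0 z0 Hf3
                  (not_eq_sym D13) D12 (not_eq_sym D23)).
  rewrite <- !(lagrange_cycle _ e2 e3 e1 l2 l3 l1) in G3.
  rewrite <- !(lagrange_cycle _ e1 e2 e3 l1 l2 l3) in G2, G3.
  fold X Y Z in G1, G2, G3.
  assert (Hlin : forall l, mode_form p l (x - X) (y - Y) (z - Z)
                           = mode_form p l x y z - mode_form p l X Y Z)
    by (intros l; unfold mode_form; ring).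
  destruct (mode_form_eq_0 p l1 l2 l3 (x - X) (y - Y) (z - Z)) as (U1 & U2 & U3); auto.
  - rewrite Hlin, F1, G1. ring.
  - rewrite Hlin, F2, G2. ring.
  - rewrite Hlin, F3, G3. ring.
  - apply Cminus_eq_0 in U1, U2, U3. auto.
Qed.

Section LagrangeTerms.

Variables (x y z p S e D : C).
Hypotheses (Dxy : x <> y) (Dyz : y <> z) (Dzx : z <> x) (HD : D = (x - y) * (y - z) * (z - x)).

Ltac lagrange_term := subst D;
  assert (A1 := Cminus_neq_0 _ _ Dxy); assert (A2 := Cminus_neq_0 _ _ Dyz);
  assert (A3 := Cminus_neq_0 _ _ Dzx); assert (A4 : x - z <> 0) by (apply Cminus_neq_0; auto);
  field; repeat split; auto.

Lemma lagrange_term12 : e * x * (y - z) / D = e * (- x) / ((x - y) * (x - z)).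
Proof. lagrange_term. Qed.

Lemma lagrange_term13 : e * (y - z) / D = e * (- 1) / ((x - y) * (x - z)).
Proof. lagrange_term. Qed.

Hypothesis (Hyz : y + z = - p - x).

Lemma lagrange_term23 : e * (y ^ 2 - z ^ 2) / D = e * (x + p) / ((x - y) * (x - z)).
Proof. replace (y ^ 2 - z ^ 2) with ((y - z) * (y + z)) by ring. rewrite Hyz. lagrange_term. Qed.

Lemma lagrange_term22 : e * x * (y ^ 2 - z ^ 2) / D = e * (x * (x + p)) / ((x - y) * (x - z)).
Proof. replace (y ^ 2 - z ^ 2) with ((y - z) * (y + z)) by ring. rewrite Hyz. lagrange_term. Qed.

Hypotheses (Hq : char_poly p S x = 0) (Hxp : x + p <> 0) (Hx0 : x <> 0).

Lemma S_root : S = - (x ^ 3 + p * x ^ 2 + x) / (x + p).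
Proof.
  assert (HS : S * (x + p) = - (x ^ 3 + p * x ^ 2 + x)).
  { transitivity (char_poly p S x - (x ^ 3 + p * x ^ 2 + x)); [unfold char_poly; ring|].
    rewrite Hq; ring. }
  rewrite <- HS. field. exact Hxp.
Qed.

Lemma lagrange_term11 : e * (- x) * ((y - z) / (y + z)) / D = e * (x ^ 2 + S) / ((x - y) * (x - z)).
Proof.
  rewrite Hyz, S_root.
  assert (A5 : - p - x <> 0) by (intros H; apply Hxp; transitivity (- (- p - x)); [ring|]; rewrite H; ring).
  lagrange_term.
Qed.

Lemma lagrange_term33 : e * (- S) * ((y ^ 2 - z ^ 2) / x) / D = e * (x ^ 2 + p * x + 1) / ((x - y) * (x - z)).
Proof.
  replace (y ^ 2 - z ^ 2) with ((y - z) * (y + z)) by ring. rewrite Hyz, S_root. lagrange_term.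
Qed.

End LagrangeTerms.

Lemma Cdiv_plus3 (a b c d : C) : (a + b + c) / d = a / d + b / d + c / d.
Proof. unfold Cdiv. ring. Qed.

Section PaperCoefficients.

Variables (p : C) (s tau : R) (l1 l2 l3 : C).
Hypotheses (Hf : forall z, char_poly p (RtoC s) z = (z - l1) * (z - l2) * (z - l3))
  (D12 : l1 <> l2) (D23 : l2 <> l3) (D13 : l1 <> l3)
  (P1 : l1 + p <> 0) (P2 : l2 + p <> 0) (P3 : l3 + p <> 0)
  (Z1 : l1 <> 0) (Z2 : l2 <> 0) (Z3 : l3 <> 0).

Ltac split_terms term :=
  pose proof (proj1 (char_poly_vieta _ _ _ _ _ Hf)) as Hsum;
  pose proof (char_poly_root _ _ _ _ _ Hf) as Hq1;
  pose proof (char_poly_root _ _ _ _ _ (char_poly_cycle _ _ _ _ _ Hf)) as Hq2;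
  pose proof (char_poly_root _ _ _ _ _ (char_poly_cycle _ _ _ _ _ (char_poly_cycle _ _ _ _ _ Hf))) as Hq3;
  unfold lagrange; cbv beta; rewrite Cdiv_plus3; f_equal; [f_equal|]; eapply term;
  first [ assumption | apply not_eq_sym; assumption | unfold Dl; ring | rewrite <- Hsum; ring ].

Lemma m11_lagrange :
  m11 l1 l2 l3 tau = lagrange (fun l => l ^ 2 + RtoC s) (ex tau l1) (ex tau l2) (ex tau l3) l1 l2 l3.
Proof. unfold m11. split_terms lagrange_term11. Qed.

Lemma m12_lagrange : m12 l1 l2 l3 tau = lagrange (fun l => - l) (ex tau l1) (ex tau l2) (ex tau l3) l1 l2 l3.
Proof. unfold m12. split_terms lagrange_term12. Qed.

Lemma m13_lagrange : m13 l1 l2 l3 tau = lagrange (fun _ => - 1) (ex tau l1) (ex tau l2) (ex tau l3) l1 l2 l3.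
Proof. unfold m13. split_terms lagrange_term13. Qed.

Lemma m22_lagrange :
  m22 l1 l2 l3 tau = lagrange (fun l => l * (l + p)) (ex tau l1) (ex tau l2) (ex tau l3) l1 l2 l3.
Proof. unfold m22. split_terms lagrange_term22. Qed.

Lemma m23_lagrange : m23 l1 l2 l3 tau = lagrange (fun l => l + p) (ex tau l1) (ex tau l2) (ex tau l3) l1 l2 l3.
Proof. unfold m23. split_terms lagrange_term23. Qed.

Lemma m33_lagrange :
  m33 l1 l2 l3 tau s = lagrange (fun l => l ^ 2 + p * l + 1) (ex tau l1) (ex tau l2) (ex tau l3) l1 l2 l3.
Proof. unfold m33. split_terms lagrange_term33. Qed.

End PaperCoefficients.

Lemma char_poly_root_plus_neq0 p S l : char_poly p S l = 0 -> p <> 0 -> l + p <> 0.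
Proof.
  intros Hl Hp H. apply Hp.
  assert (Hl' : l = - p) by (transitivity ((l + p) - p); [ring|]; rewrite H; ring).
  subst l. transitivity (- char_poly p S (- p)); [unfold char_poly; ring|]. rewrite Hl; ring.
Qed.

Lemma char_poly_root_neq0 p S l : char_poly p S l = 0 -> p <> 0 -> S <> 0 -> l <> 0.
Proof.
  intros Hl Hp HS H. subst l. apply (Cmult_neq_0 p S Hp HS). rewrite <- Hl. unfold char_poly. ring.
Qed.

Lemma mode_solution (p : C) (s tau : R) (l1 l2 l3 x y z x0 y0 z0 : C) :
  (forall z, char_poly p (RtoC s) z = (z - l1) * (z - l2) * (z - l3)) ->
  l1 <> l2 -> l2 <> l3 -> l1 <> l3 -> p <> 0 -> RtoC s <> 0 ->
  mode_form p l1 x y z = ex tau l1 * mode_form p l1 x0 y0 z0 ->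
  mode_form p l2 x y z = ex tau l2 * mode_form p l2 x0 y0 z0 ->
  mode_form p l3 x y z = ex tau l3 * mode_form p l3 x0 y0 z0 ->
  x = m11 l1 l2 l3 tau * x0 + m12 l1 l2 l3 tau * y0 + m13 l1 l2 l3 tau * z0 /\
  y = - m12 l1 l2 l3 tau * x0 + m22 l1 l2 l3 tau * y0 + m23 l1 l2 l3 tau * z0 /\
  z = RtoC s * m13 l1 l2 l3 tau * x0 - RtoC s * m23 l1 l2 l3 tau * y0 + m33 l1 l2 l3 tau s * z0.
Proof.
  intros Hf D12 D23 D13 Hp Hs F1 F2 F3.
  pose proof (char_poly_root _ _ _ _ _ Hf) as Hq1.
  pose proof (char_poly_root _ _ _ _ _ (char_poly_cycle _ _ _ _ _ Hf)) as Hq2.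
  pose proof (char_poly_root _ _ _ _ _ (char_poly_cycle _ _ _ _ _ (char_poly_cycle _ _ _ _ _ Hf))) as Hq3.
  assert (P1 := char_poly_root_plus_neq0 _ _ _ Hq1 Hp).
  assert (P2 := char_poly_root_plus_neq0 _ _ _ Hq2 Hp).
  assert (P3 := char_poly_root_plus_neq0 _ _ _ Hq3 Hp).
  assert (Z1 := char_poly_root_neq0 _ _ _ Hq1 Hp Hs).
  assert (Z2 := char_poly_root_neq0 _ _ _ Hq2 Hp Hs).
  assert (Z3 := char_poly_root_neq0 _ _ _ Hq3 Hp Hs).
  destruct (sylvester_solution p (RtoC s) l1 l2 l3 (ex tau l1) (ex tau l2) (ex tau l3) x y z x0 y0 z0)
    as (-> & -> & ->); auto.
  rewrite (m11_lagrange p s), (m12_lagrange p s), (m13_lagrange p s), (m22_lagrange p s),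
    (m23_lagrange p s), (m33_lagrange p) by auto.
  unfold lagrange, adj_row1, adj_row2, adj_row3, Cdiv. split; [|split]; ring.
Qed.

Close Scope C_scope.

(** * The discriminant *)

Definition peval (cs : list R) (x : R) : R := fold_right (fun a acc => a + x * acc) 0 cs.

Fixpoint synth_div (r : R) (cs : list R) : list R :=
  match cs with nil => nil | b :: rest => peval cs r :: synth_div r rest end.

Lemma synth_div_length r cs : length (synth_div r cs) = length cs.
Proof. induction cs; cbn; auto. Qed.

Lemma peval_synth_div r x cs : forall a,
  peval (a :: cs) x = (x - r) * peval (synth_div r cs) x + peval (a :: cs) r.
Proof.
  induction cs as [|b cs IH]; intros a.
  - simpl. ring.
  - change (peval (a :: b :: cs) x) with (a + x * peval (b :: cs) x).
    rewrite (IH b). simpl. ring.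
Qed.

Lemma peval_roots_finite n : forall cs, (length cs <= n)%nat -> (exists y, peval cs y <> 0) ->
  exists L, forall x, peval cs x = 0 -> In x L.
Proof.
  induction n as [|n IH]; intros cs Hlen [y Hy].
  - destruct cs; [simpl in Hy; lra | cbn in Hlen; lia].
  - destruct cs as [|a cs]; [simpl in Hy; lra|].
    destruct (classic (exists r, peval (a :: cs) r = 0)) as [[r Hr]|Hno].
    + assert (Hq : peval (synth_div r cs) y <> 0).
      { intros H0. apply Hy. rewrite (peval_synth_div r y cs a), H0, Hr. ring. }
      destruct (IH (synth_div r cs)) as [L HL].
      { rewrite synth_div_length. cbn in Hlen. lia. }
      { exists y; exact Hq. }
      exists (r :: L). intros x Hx. rewrite (peval_synth_div r x cs a), Hr, Rplus_0_r in Hx.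
      apply Rmult_integral in Hx. destruct Hx as [Hx|Hx].
      * left. lra.
      * right. apply HL, Hx.
    + exists nil. intros x Hx. exfalso. apply Hno. exists x; exact Hx.
Qed.

(* The discriminant of [z^3 + a s z^2 + (s + 1) z + a s^2], as a polynomial in [s]. *)
Definition disc_coeffs (a : R) : list R :=
  (-4) :: (-12) :: (a ^ 2 - 12) :: (20 * a ^ 2 - 4) :: (-8 * a ^ 2) :: (-4 * a ^ 4) :: nil.

Lemma disc_roots_finite a : exists L, forall s, peval (disc_coeffs a) s = 0 -> In s L.
Proof. apply (peval_roots_finite 6); [cbn; lia|]. exists 0. cbn. lra. Qed.

Lemma roots_of_cubic_char_poly a s l1 l2 l3 : roots_of_cubic a s l1 l2 l3 ->
  forall z, char_poly (RtoC (a * s)) (RtoC s) z = ((z - l1) * (z - l2) * (z - l3))%C.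
Proof.
  intros H z. rewrite <- H. unfold char_poly.
  replace (a * s ^ 2) with (a * s * s) by ring. rewrite RtoC_plus, (RtoC_mult (a * s) s).
  reflexivity.
Qed.

Lemma Dl_sq_disc a s l1 l2 l3 : roots_of_cubic a s l1 l2 l3 ->
  (Dl l1 l2 l3 * Dl l1 l2 l3)%C = RtoC (peval (disc_coeffs a) s).
Proof.
  intros H. destruct (char_poly_vieta _ _ _ _ _ (roots_of_cubic_char_poly _ _ _ _ _ H)) as (H1 & H2 & H3).
  set (p := RtoC (a * s)) in *. set (S := RtoC s) in *.
  transitivity (p * p * (S + 1) * (S + 1) - 4 * (S + 1) ^ 3 - 4 * p ^ 3 * (p * S) - 27 * (p * S) ^ 2
                + 18 * p * (S + 1) * (p * S))%C.
  - assert (Hp : p = (- (l1 + l2 + l3))%C) by (rewrite H1; Cring).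
    assert (HS : (S + 1)%C = (l1 * l2 + l1 * l3 + l2 * l3)%C) by (rewrite H2; Cring).
    assert (HpS : (p * S)%C = (- (l1 * l2 * l3))%C) by (rewrite H3; Cring).
    rewrite HS, HpS, Hp. unfold Dl. Cring.
  - unfold p, S, RtoC, Cmult, Cplus, Cminus, Copp, Cpow; cbn.
    apply injective_projections; cbn; ring.
Qed.

(** * The transverse solution *)

Lemma vscal_inj (S : C) v w : S <> 0%C -> vscal S v = vscal S w -> v = w.
Proof.
  intros HS H.
  assert (K : forall x y : C, (S * x)%C = (S * y)%C -> x = y).
  { intros x y Hxy. apply Cminus_eq_0, (Cmult_eq_0_r S); [|exact HS].
    transitivity (S * x - S * y)%C; [Cring|]. rewrite Hxy. Cring. }
  apply V3_eq; apply K;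
  [ exact (f_equal c1 H) | exact (f_equal c2 H) | exact (f_equal c3 H) ].
Qed.

Lemma vscal_factor (S x y z : C) (X Y Z : V3) :
  vadd (vadd (vscal (S * x)%C X) (vscal (- (S * y))%C Y)) (vscal z (vscal S Z))
  = vscal S (vadd (vadd (vscal x X) (vscal (- y)%C Y)) (vscal z Z)).
Proof. vring. Qed.

Lemma RtoC_neq_0 x : x <> 0 -> RtoC x <> 0%C.
Proof. intros Hx H. apply Hx. exact (f_equal fst H). Qed.

Lemma mode_solution_V (p : C) (s tau : R) (l1 l2 l3 : C) (U E W U0 E0 W0 : V3) :
  (forall z, char_poly p (RtoC s) z = ((z - l1) * (z - l2) * (z - l3))%C) ->
  l1 <> l2 -> l2 <> l3 -> l1 <> l3 -> p <> 0%C -> RtoC s <> 0%C ->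
  mode p l1 U E W = vscal (ex tau l1) (mode p l1 U0 E0 W0) ->
  mode p l2 U E W = vscal (ex tau l2) (mode p l2 U0 E0 W0) ->
  mode p l3 U E W = vscal (ex tau l3) (mode p l3 U0 E0 W0) ->
  U = vadd (vadd (vscal (m11 l1 l2 l3 tau) U0) (vscal (m12 l1 l2 l3 tau) E0)) (vscal (m13 l1 l2 l3 tau) W0) /\
  E = vadd (vadd (vscal (- m12 l1 l2 l3 tau)%C U0) (vscal (m22 l1 l2 l3 tau) E0))
           (vscal (m23 l1 l2 l3 tau) W0) /\
  W = vadd (vadd (vscal (RtoC s * m13 l1 l2 l3 tau)%C U0) (vscal (- (RtoC s * m23 l1 l2 l3 tau))%C E0))
           (vscal (m33 l1 l2 l3 tau s) W0).
Proof.
  intros Hf D12 D23 D13 Hp Hs G1 G2 G3.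
  assert (Hsol := fun (cc : V3 -> C) =>
    mode_solution p s tau l1 l2 l3 (cc U) (cc E) (cc W) (cc U0) (cc E0) (cc W0) Hf D12 D23 D13 Hp Hs).
  destruct (Hsol c1 (f_equal c1 G1) (f_equal c1 G2) (f_equal c1 G3)) as (X1 & Y1 & Z1).
  destruct (Hsol c2 (f_equal c2 G1) (f_equal c2 G2) (f_equal c2 G3)) as (X2 & Y2 & Z2).
  destruct (Hsol c3 (f_equal c3 G1) (f_equal c3 G2) (f_equal c3 G3)) as (X3 & Y3 & Z3).
  split; [|split]; apply V3_eq; cbn [c1 c2 c3 vadd vscal mkV3 fst snd];
    [ exact X1 | exact X2 | exact X3 | exact Y1 | exact Y2 | exact Y3
    | rewrite Z1 | rewrite Z2 | rewrite Z3 ]; Cring.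
Qed.

Section TransverseSolution.

Variables (gamma beta mu c : R) (a : R3) (l1 l2 l3 : C).
Variables (n : R -> R3 -> C) (u E B : R -> R3 -> V3) (u0 E0 B0 : R3 -> V3).
Hypotheses (Hsys : fourier_system gamma beta mu n u E B)
  (Hu : initial_data u u0) (HE : initial_data E E0) (HB : initial_data B B0)
  (Ha : rnorm2 a = 1) (Hbeta : 0 < beta) (Hmu : 0 < mu) (Hc : c <> 0)
  (Hf : forall z, char_poly (RtoC (mu * beta * (c * c))) (RtoC (c * c)) z = ((z - l1) * (z - l2) * (z - l3))%C)
  (D12 : l1 <> l2) (D23 : l2 <> l3) (D13 : l1 <> l3).

Lemma transverse_solution t : 0 < t ->
  let k := rscal (beta * c) a in
  (proj_perp a (u t k), proj_perp a (E t k), proj_perp a (B t k))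
  = Mapply l1 l2 l3 (beta * t) (rscal c a) (proj_perp a (u0 k)) (proj_perp a (E0 k)) (proj_perp a (B0 k)).
Proof.
  intros Ht. cbv zeta.
  assert (Hcc : 0 < c * c) by nra.
  assert (Hp : RtoC (mu * beta * (c * c)) <> 0%C).
  { apply RtoC_neq_0, Rgt_not_eq. apply Rmult_lt_0_compat; [apply Rmult_lt_0_compat|]; assumption. }
  assert (HS : RtoC (c * c) <> 0%C) by (apply RtoC_neq_0; lra).
  pose proof (fun l => transverse_mode_evolution gamma beta mu c a n u E B u0 E0 B0 Hsys Ha Hu HE HB l t Ht)
    as G.
  pose proof (char_poly_root _ _ _ _ _ Hf) as Hq1.
  pose proof (char_poly_root _ _ _ _ _ (char_poly_cycle _ _ _ _ _ Hf)) as Hq2.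
  pose proof (char_poly_root _ _ _ _ _ (char_poly_cycle _ _ _ _ _ (char_poly_cycle _ _ _ _ _ Hf))) as Hq3.
  destruct (mode_solution_V _ (c * c) (beta * t) l1 l2 l3 _ _ _ _ _ _ Hf D12 D23 D13 Hp HS
              (G l1 Hq1) (G l2 Hq2) (G l3 Hq3)) as (-> & -> & HW).
  unfold Mapply. rewrite rnorm_rscal_unit by exact Ha. replace (c ^ 2) with (c * c) by ring.
  f_equal.
  apply (vscal_inj (RtoC (c * c))); [exact HS|].
  rewrite <- (icross_icross_proj_perp a c (B t (rscal (beta * c) a)) Ha), HW.
  rewrite !icross_add, !icross_scal, icross_icross_proj_perp by exact Ha.
  apply vscal_factor.
Qed.

End TransverseSolution.

Lemma rnorm_pos k : k <> (0, 0, 0) -> 0 < rnorm k.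
Proof.
  intros Hk. apply sqrt_lt_R0. destruct k as [[k1 k2] k3]. unfold r1, r2, r3; cbn.
  apply Rnot_le_lt. intros H. apply Hk.
  assert (Z : forall x y z : R, x ^ 2 + y ^ 2 + z ^ 2 <= 0 -> x = 0).
  { intros x y z Hxyz. destruct (Req_dec x 0) as [|hx]; [assumption|].
    pose proof (Rsqr_pos_lt x hx). unfold Rsqr in *. nra. }
  f_equal; [f_equal|]; [apply (Z k1 k2 k3) | apply (Z k2 k1 k3) | apply (Z k3 k1 k2)]; lra.
Qed.

Lemma unit_direction k beta : k <> (0, 0, 0) -> 0 < beta ->
  let a := rscal (/ rnorm k) k in let c := / beta * rnorm k in
  rnorm2 a = 1 /\ 0 < c /\ k = rscal (beta * c) a /\ rscal (/ beta) k = rscal c a.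
Proof.
  intros Hk Hbeta a c. pose proof (rnorm_pos k Hk) as Hr.
  assert (Hrr : rnorm k * rnorm k = r1 k ^ 2 + r2 k ^ 2 + r3 k ^ 2).
  { unfold rnorm. apply sqrt_sqrt. nra. }
  unfold a, c in *. set (r := rnorm k) in *. clearbody r.
  unfold rnorm2, rscal, r1, r2, r3 in *. destruct k as [[k1 k2] k3]; cbn [fst snd] in *.
  split; [|split; [|split]].
  - transitivity ((k1 ^ 2 + k2 ^ 2 + k3 ^ 2) / (r * r)); [field; lra|]. rewrite <- Hrr. field. lra.
  - apply Rmult_lt_0_compat; [apply Rinv_0_lt_compat|]; assumption.
  - f_equal; [f_equal|]; field; lra.
  - f_equal; [f_equal|]; field; lra.
Qed.

Lemma Dl_neq0_distinct l1 l2 l3 : Dl l1 l2 l3 <> 0%C -> l1 <> l2 /\ l2 <> l3 /\ l1 <> l3.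
Proof.
  intros HD. split; [|split]; intros ->; apply HD; unfold Dl; Cring.
Qed.

Theorem proposition3p2 (gamma beta mu : R) :
  0 < gamma -> 0 < beta -> 0 < mu ->
  exists S : list R,
  forall (n : R -> R3 -> C) (u E B : R -> R3 -> V3)
         (n0 : R3 -> C) (u0 E0 B0 : R3 -> V3),
    fourier_system gamma beta mu n u E B ->
    initial_data n n0 -> initial_data u u0 ->
    initial_data E E0 -> initial_data B B0 ->
    forall k : R3, k <> (0, 0, 0) -> ~ In (rnorm k) S ->
    forall l1 l2 l3 : C,
      roots_of_cubic (mu * beta) (rnorm (rscal (/ beta) k) ^ 2) l1 l2 l3 ->
      forall t : R, 0 < t ->
        (perp k (u t k), perp k (E t k), perp k (B t k))
        = Mapply l1 l2 l3 (beta * t) (rscal (/ beta) k)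
                 (perp k (u0 k)) (perp k (E0 k)) (perp k (B0 k)).
Proof.
  intros Hgamma Hbeta Hmu.
  destruct (disc_roots_finite (mu * beta)) as [L HL].
  exists (map (fun s => beta * sqrt s) L).
  intros n u E B n0 u0 E0 B0 Hsys _ Hu HE HB k Hk HkL l1 l2 l3 Hroots t Ht.
  destruct (unit_direction k beta Hk Hbeta) as (Ha & Hc & Hka & Hxi).
  set (a := rscal (/ rnorm k) k) in *. set (c := / beta * rnorm k) in *.
  rewrite Hxi, (rnorm_rscal_unit a c Ha) in Hroots.
  assert (Hdisc : Dl l1 l2 l3 <> 0%C).
  { intros H0. apply HkL, in_map_iff. exists (c ^ 2). split.
    - rewrite sqrt_pow2 by lra. unfold c. field. lra.
    - apply HL. pose proof (Dl_sq_disc _ _ _ _ _ Hroots) as Hsq.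
      rewrite H0 in Hsq. apply (f_equal fst) in Hsq. unfold Cmult, RtoC in Hsq. cbn [fst snd] in Hsq. lra. }
  destruct (Dl_neq0_distinct _ _ _ Hdisc) as (D12 & D23 & D13).
  pose proof (roots_of_cubic_char_poly _ _ _ _ _ Hroots) as Hf.
  replace (c ^ 2) with (c * c) in Hf by ring.
  pose proof (transverse_solution gamma beta mu c a l1 l2 l3 n u E B u0 E0 B0
                Hsys Hu HE HB Ha Hbeta Hmu (Rgt_not_eq _ _ Hc) Hf D12 D23 D13 t Ht) as Hsol.
  cbv zeta in Hsol. rewrite <- Hka in Hsol. rewrite Hxi. exact Hsol.
Qed.
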